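(* Let $Y=[0,1)$ with the topology whose open sets are exactly the sets $[0,\lambda)$ for $0\le\lambda\le1$, and let $L=\mathcal{O}(Y)$. Let $\mathfrak{I}=([0,1],\wedge,\vee,\neg,0,1)$ be regarded as a relational structure of type $(2,2,1,0,0)$. Then the type-2 fuzzy truth value algebra $\mathbb{M}$ is isomorphic to the convolution algebra $L^{\mathfrak{I}}$, and is isomorphic to the complex algebra $\hat{\mathfrak{I}}^+$ of the constant relational étalé $\hat{\mathfrak{I}}$ in the topos of étalé spaces over $Y$.
   Context: Let $\mathbb{I}=[0,1]$ with its usual order, $\wedge=\min$, $\vee=\max$, $\neg x=1-x$. The type-2 fuzzy truth value algebra is $\mathbb{M}=(\mathbb{I}^{\mathbb{I}},\sqcap,\sqcup,\neg,\underline{0},\underline{1})$ where, for $\alpha,\beta:\mathbb{I}\to\mathbb{I}$: $(\alpha\sqcap\beta)(x)=\bigvee\{\alpha(y)\wedge\beta(z)\mid y\wedge z=x\}$, $(\alpha\sqcup\beta)(x)=\bigvee\{\alpha(y)\wedge\beta(z)\mid y\vee z=x\}$, $(\neg\alpha)(x)=\bigvee\{\alpha(y)\mid \neg y=x\}$, $\underline{0}(x)=1$ if $x=0$ and $0$ otherwise, $\underline{1}(x)=1$ if $x=1$ and $0$ otherwise. As a relational structure, $\mathfrak{I}$ has ternary relations $\{(x,y,z)\mid x\wedge y=z\}$, $\{(x,y,z)\mid x\vee y=z\}$, binary relation $\{(x,y)\mid \neg x=y\}$, and unary relations $\{0\},\{1\}$. A relational structure $\mathfrak{X}=(X,(R_j)_J)$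 of type $\tau:J\to\mathbb{N}$, $j\mapsto n_j$, has $R_j\subseteq X^{n_j+1}$. For a complete lattice $L$, the convolution algebra $L^{\mathfrak{X}}$ has underlying set $L^X$ and operations $f_j(\alpha_1,\ldots,\alpha_{n_j})(x)=\bigvee\{\alpha_1(x_1)\wedge\cdots\wedge\alpha_{n_j}(x_{n_j})\mid (x_1,\ldots,x_{n_j},x)\in R_j\}$. An étalé space over $Y$ is a pair $(E,\pi)$ with $\pi:E\to Y$ a local homeomorphism; subobjects of $(E,\pi)$ correspond to open subsets of $E$. The constant étalé $\hat{X}$ is $X\times Y$ ($X$ discrete) with projection to $Y$; $\hat{X}^k$ is identified with $X^k\times Y$ and $\hat{R}=R\times Y$. The constant relational étalé is $\hat{\mathfrak{X}}=(\hat{X},(\hat{R}_j)_J)$, and its complex algebra $\hat{\mathfrak{X}}^+$ has underlying set the subobjects (open subsets) of $\hat{X}$ and operations given by étalé relational image: $(x,y)\in\hat{R}_j(A_1,\ldots,A_{n_j})$ iff there are $x_1,\ldots,x_{n_j}$ with $(x_1,\ldots,x_{n_j},x)\in R_j$ and $(x_i,y)\in A_i$ for all $i$. *)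

From mathcomp Require Import all_boot all_order all_algebra.
From mathcomp Require Import all_classical all_reals.
From mathcomp Require Import Rstruct.
Import Order.TTheory GRing.Theory Num.Theory.
Local Open Scope ring_scope.
Local Open Scope classical_set_scope.

Definition R : realType := Rdefinitions.R.

Definition I := {x : R | 0 <= x <= 1}.

Definition Rmeet (x y z : I) : Prop := Num.min (sval x) (sval y) = sval z.
Definition Rjoin (x y z : I) : Prop := Num.max (sval x) (sval y) = sval z.
Definition Rneg (x y : I) : Prop := 1 - sval x = sval y.
Definition Rzero (x : I) : Prop := sval x = 0.
Definition Rone (x : I) : Prop := sval x = 1.

Definition Yset : set R := [set y | 0 <= y < 1].
Definition openY (U : set R) : Prop :=
  exists l : R, 0 <= l <= 1 /\ U = [set y | 0 <= y < l].

(* Algebras of type (2,2,1,0,0), presented as an ambient type together with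
   a predicate carving out the carrier. *)
Record alg := Alg {
  car : Type;
  mem : car -> Prop;
  op_meet : car -> car -> car;
  op_join : car -> car -> car;
  op_neg : car -> car;
  op_zero : car;
  op_one : car }.

Definition alg_iso (A B : alg) : Prop :=
  exists f : car A -> car B,
    (forall a, mem A a -> mem B (f a)) /\
    (forall a b, mem A a -> mem A b -> f a = f b -> a = b) /\
    (forall b, mem B b -> exists a, mem A a /\ f a = b) /\
    (forall a b, mem A a -> mem A b -> f (op_meet A a b) = op_meet B (f a) (f b)) /\
    (forall a b, mem A a -> mem A b -> f (op_join A a b) = op_join B (f a) (f b)) /\
    (forall a, mem A a -> f (op_neg A a) = op_neg B (f a)) /\
    f (op_zero A) = op_zero B /\
    f (op_one A) = op_one B.

Definition Mcar := I -> R.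
Definition Mmem (a : Mcar) : Prop := forall x, 0 <= a x <= 1.
Definition Mmeet (a b : Mcar) : Mcar := fun x =>
  sup [set r | exists y z : I, Num.min (sval y) (sval z) = sval x /\
                                r = Num.min (a y) (b z)].
Definition Mjoin (a b : Mcar) : Mcar := fun x =>
  sup [set r | exists y z : I, Num.max (sval y) (sval z) = sval x /\
                                r = Num.min (a y) (b z)].
Definition Mneg (a : Mcar) : Mcar := fun x =>
  sup [set r | exists y : I, 1 - sval y = sval x /\ r = a y].
Definition Mzero : Mcar := fun x => if sval x == 0 then 1 else 0.
Definition Mone : Mcar := fun x => if sval x == 1 then 1 else 0.

Definition Malg : alg := @Alg Mcar Mmem Mmeet Mjoin Mneg Mzero Mone.

(* ---------- The convolution algebra L^I, L = O(Y) ----------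
   Elements of L are subsets of R that are open in Y; joins in L are unions
   (O(Y) is closed under arbitrary unions), finite meets are intersections,
   the empty meet is the top element Y. *)
Definition Lcar := I -> set R.
Definition Lmem (a : Lcar) : Prop := forall x, openY (a x).
Definition conv2 (Rel : I -> I -> I -> Prop) (a b : Lcar) : Lcar := fun x =>
  [set t | exists y z : I, Rel y z x /\ a y t /\ b z t].
Definition conv1 (Rel : I -> I -> Prop) (a : Lcar) : Lcar := fun x =>
  [set t | exists y : I, Rel y x /\ a y t].
Definition conv0 (Rel : I -> Prop) : Lcar := fun x =>
  [set t | Rel x /\ Yset t].

Definition LIalg : alg :=
  @Alg Lcar Lmem (conv2 Rmeet) (conv2 Rjoin) (conv1 Rneg) (conv0 Rzero) (conv0 Rone).

(* ---------- The complex algebra of the constant relational etale ----------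
   hat I = I x Y with I discrete; its subobjects are its open subsets, i.e.
   the subsets of I x Y all of whose fibres {y | (x,y) in A} are open in Y. *)
Definition Ccar := set (I * R).
Definition Cmem (A : Ccar) : Prop :=
  (forall p, A p -> Yset p.2) /\ (forall x, openY [set y | A (x, y)]).
Definition img2 (Rel : I -> I -> I -> Prop) (A B : Ccar) : Ccar :=
  [set p | exists y z : I, Rel y z p.1 /\ A (y, p.2) /\ B (z, p.2)].
Definition img1 (Rel : I -> I -> Prop) (A : Ccar) : Ccar :=
  [set p | exists y : I, Rel y p.1 /\ A (y, p.2)].
Definition img0 (Rel : I -> Prop) : Ccar :=
  [set p | Rel p.1 /\ Yset p.2].

Definition Calg : alg :=
  @Alg Ccar Cmem (img2 Rmeet) (img2 Rjoin) (img1 Rneg) (img0 Rzero) (img0 Rone).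

From mathcomp Require Import all_boot all_order all_algebra.
From mathcomp Require Import all_classical all_reals.
Import Order.TTheory GRing.Theory Num.Theory.
Local Open Scope ring_scope.
Local Open Scope classical_set_scope.

(* The open sets of Y are the segments [0, l) with 0 <= l <= 1, and l |-> [0, l)
   is an isomorphism of complete lattices from [0,1] onto O(Y): it turns
   suprema into unions and binary minima into intersections.  Applying it
   pointwise therefore sends the sup-min convolutions defining M to the
   union-intersection convolutions defining L^I.  Currying identifies L^I
   with the open subsets of the constant etale I x Y, and the relational
   images of the complex algebra are exactly the convolutions. *)

Definition seg (l : R) : set R := [set t | 0 <= t < l].

Lemma seg0 : seg 0 = set0.
Proof. by apply/seteqP; split => t //= /andP[t0 /(le_lt_trans t0)]; rewrite ltxx. Qed.

Lemma segI (l m : R) : seg (Num.min l m) = seg l `&` seg m.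
Proof.
apply/seteqP; split => t; rewrite /seg /=.
  by rewrite lt_min => /andP[-> /andP[-> ->]].
by case=> /andP[-> tl] /andP[_ tm]; rewrite lt_min tl tm.
Qed.

Lemma seg_sup (S : set R) : has_ubound S -> seg (sup S) = \bigcup_(r in S) seg r.
Proof.
move=> ubS; have [->|S0] := eqVneq S set0.
  by rewrite sup0 seg0 bigcup_set0.
have {}S0 : S !=set0 by apply/set0P.
apply/seteqP; split => t; rewrite /seg /=.
  by case/andP=> t0 /(sup_gt S0) [r Sr tr]; exists r; rewrite //= t0.
case=> r Sr /andP[t0 tr]; rewrite t0 /=.
exact: lt_le_trans tr (ub_le_sup ubS Sr).
Qed.

Lemma seg_if (P : Prop) (b : bool) (l : R) : reflect P b ->
  seg (if b then l else 0) = [set t | P /\ seg l t].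
Proof.
move=> bP; apply/seteqP; split => t.
  by case: bP => [p|_]; [split | rewrite seg0].
by case=> /bP ->.
Qed.

Lemma seg_inj (l m : R) : 0 <= l -> 0 <= m -> seg l = seg m -> l = m.
Proof.
have seg_le (u v : R) : 0 <= v -> seg u = seg v -> u <= v.
  move=> v0 e; rewrite leNgt; apply/negP => vu.
  have : seg u v by rewrite /seg /= vu v0.
  by rewrite e /seg /= ltxx andbF.
by move=> l0 m0 e; apply/le_anti; rewrite (seg_le _ _ m0 e) (seg_le _ _ l0 (esym e)).
Qed.

Lemma alg_iso_trans (A B C : alg) : alg_iso A B -> alg_iso B C -> alg_iso A C.
Proof.
move=> [f [fmem [finj [fsurj [fmeet [fjoin [fneg [fzero fone]]]]]]]].
move=> [g [gmem [ginj [gsurj [gmeet [gjoin [gneg [gzero gone]]]]]]]].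
exists (g \o f); split=> [a /fmem /gmem //|]; split.
  move=> a b am bm gfab; apply: finj => //; apply: ginj gfab; exact: fmem.
split.
  move=> c cm; have [b [bm <-]] := gsurj c cm; have [a [am <-]] := fsurj b bm.
  by exists a.
split; first by move=> a b am bm /=; rewrite fmeet // gmeet //; exact: fmem.
split; first by move=> a b am bm /=; rewrite fjoin // gjoin //; exact: fmem.
split; first by move=> a am /=; rewrite fneg // gneg //; exact: fmem.
by rewrite /= fzero fone gzero gone.
Qed.

Definition seg_fun (a : Mcar) : Lcar := fun x => seg (a x).

Section SegFun.
Variables a b : Mcar.
Hypotheses (am : Mmem a) (bm : Mmem b).

Lemma seg_fun_conv2 (Rel : I -> I -> I -> Prop) :
  seg_fun (fun x => sup [set r | exists y z : I, Rel y z x /\ r = Num.min (a y) (b z)])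
  = conv2 Rel (seg_fun a) (seg_fun b).
Proof.
apply: funext => x; rewrite /seg_fun seg_sup.
  apply/seteqP; split => t.
    by case=> _ [y [z [Ryz ->]]]; rewrite segI => -[]; exists y, z.
  by case=> y [z [Ryz yz]]; exists (Num.min (a y) (b z)); [exists y, z | rewrite segI].
by exists 1 => _ [y [z [_ ->]]]; rewrite ge_min; have /andP[_ ->] := am y.
Qed.

Lemma seg_fun_conv1 (Rel : I -> I -> Prop) :
  seg_fun (fun x => sup [set r | exists y : I, Rel y x /\ r = a y])
  = conv1 Rel (seg_fun a).
Proof.
apply: funext => x; rewrite /seg_fun seg_sup.
  apply/seteqP; split => t; first by case=> _ [y [Ryx ->]]; exists y.
  by case=> y [Ryx ayt]; exists (a y) => //; exists y.
by exists 1 => _ [y [_ ->]]; have /andP[] := am y.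
Qed.

Lemma seg_fun_mem : Lmem (seg_fun a).
Proof. by move=> x; exists (a x). Qed.

Lemma seg_fun_inj : seg_fun a = seg_fun b -> a = b.
Proof.
move=> e; apply: funext => x; apply: seg_inj (congr1 (@^~ x) e).
  by have /andP[] := am x.
by have /andP[] := bm x.
Qed.

End SegFun.

Lemma seg_fun_indicator (v : R) :
  seg_fun (fun x => if sval x == v then 1 else 0) = conv0 (fun x => sval x = v).
Proof. by apply: funext => x; apply: seg_if; apply: eqP. Qed.

Lemma seg_fun_surj (c : Lcar) : Lmem c -> exists a, Mmem a /\ seg_fun a = c.
Proof.
move=> /choice [a ac]; exists a; split; first by move=> x; case: (ac x).
by apply: funext => x; case: (ac x) => _ ->.
Qed.

Lemma Malg_LIalg_iso : alg_iso Malg LIalg.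
Proof.
exists seg_fun; split; first exact: seg_fun_mem.
split; first exact: seg_fun_inj.
split; first exact: seg_fun_surj.
split; first by move=> a b am bm; exact: seg_fun_conv2.
split; first by move=> a b am bm; exact: seg_fun_conv2.
split; first by move=> a am; exact: seg_fun_conv1.
by split; apply: seg_fun_indicator.
Qed.

Definition uncurry_set (c : Lcar) : Ccar := [set p | c p.1 p.2].

Lemma LIalg_Calg_iso : alg_iso LIalg Calg.
Proof.
exists uncurry_set; split.
  move=> c cm; split=> [[x t] | x]; last exact: cm x.
  rewrite /uncurry_set /Yset /=; have [l [/andP[_ l1] ->]] := cm x.
  by case/andP=> -> tl; exact: lt_le_trans tl l1.
split.
  move=> c d _ _ e; apply: funext => x; apply: funext => t.
  exact: (congr1 (fun A : Ccar => A (x, t)) e).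
split.
  move=> A [_ Aopen]; exists (fun x => [set t | A (x, t)]); split => //.
  by apply: funext => -[].
by [].
Qed.

Theorem corollary2 : alg_iso Malg LIalg /\ alg_iso Malg Calg.
Proof.
split; first exact: Malg_LIalg_iso.
exact: alg_iso_trans Malg_LIalg_iso LIalg_Calg_iso.
Qed.
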